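(* Let $m\ge 0$ and call a square of type B$'$ any $4\times 4$ array with entries in $\{0,1,\dots,2^m-1\}$ whose first row and first column consist of zeros and in which every row and every column has bitwise XOR equal to $0$ (repetitions allowed). Then, up to applying an invertible affine transformation of $\mathbb{Z}_2^m$ to all entries (entries identified with vectors of $\mathbb{Z}_2^m$ via binary expansion), permuting the last three rows, permuting the last three columns, and reflecting along the main diagonal, every square of type B$'$ is one of the following ten arrays (rows listed top to bottom, separated by semicolons; only those whose entries are less than $2^m$ occur): (1) $0,0,0,0;\ 0,0,0,0;\ 0,0,0,0;\ 0,0,0,0$; (2) $0,0,0,0;\ 0,0,0,0;\ 0,0,1,1;\ 0,0,1,1$; (3) $0,0,0,0;\ 0,0,0,0;\ 0,1,2,3;\ 0,1,2,3$; (4) $0,0,0,0;\ 0,0,1,1;\ 0,1,0,1;\ 0,1,1,0$; (5) $0,0,0,0;\ 0,0,1,1;\ 0,1,2,3;\ 0,1,3,2$; (6) $0,0,0,0;\ 0,0,1,1;\ 0,2,0,2;\ 0,2,1,3$; (7) $0,0,0,0;\ 0,0,1,1;\ 0,2,4,6;\ 0,2,5,7$; (8) $0,0,0,0;\ 0,1,2,3;\ 0,2,3,1;\ 0,3,1,2$; (9) $0,0,0,0;\ 0,1,2,3;\ 0,2,4,6;\ 0,3,6,5$; (10) $0,0,0,0;\ 0,1,2,3;\ 0,4,8,12;\ 0,5,10,15$.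
   Context: Bitwise XOR of nonnegative integers is addition in $\mathbb{Z}_2^m$ of their binary expansions. Squares of type B$'$ are the squares of type B (in the EvenQuads-$2^{m+4}$ deck: arrays of multiples of $16$ with zero first row and column and all rows/columns XOR-ing to $0$) divided by $16$. *)

From mathcomp Require Import all_boot all_order all_algebra all_fingroup.
Set Implicit Arguments. Unset Strict Implicit. Unset Printing Implicit Defensive.
Import GRing.Theory.
Local Open Scope ring_scope.

(* Binary expansion of n, truncated to m bits, as a vector of Z_2^m
   (coordinate i = bit i of n). Injective on {0,...,2^m-1}. *)
Definition bin (m n : nat) : 'rV['F_2]_m :=
  \row_(i < m) ((odd (n %/ 2 ^ i)%N)%:R : 'F_2).

(* Squares of type B': 4x4 arrays with entries in {0,...,2^m-1}, zero first
   row and column, every row and every column XOR-ing to 0 (XOR of entries =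
   sum of binary expansions in Z_2^m). *)
Definition typeBp (m : nat) (S : 'I_4 -> 'I_4 -> nat) : Prop :=
  [/\ (forall i j, (S i j < 2 ^ m)%N),
      (forall j, S ord0 j = 0%N),
      (forall i, S i ord0 = 0%N),
      (forall i, \sum_(j < 4) bin m (S i j) = 0) &
      (forall j, \sum_(i < 4) bin m (S i j) = 0)].

Definition canon : seq (seq (seq nat)) :=
  [:: [:: [:: 0;0;0;0]; [:: 0;0;0;0]; [:: 0;0;0;0]; [:: 0;0;0;0]];
      [:: [:: 0;0;0;0]; [:: 0;0;0;0]; [:: 0;0;1;1]; [:: 0;0;1;1]];
      [:: [:: 0;0;0;0]; [:: 0;0;0;0]; [:: 0;1;2;3]; [:: 0;1;2;3]];
      [:: [:: 0;0;0;0]; [:: 0;0;1;1]; [:: 0;1;0;1]; [:: 0;1;1;0]];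
      [:: [:: 0;0;0;0]; [:: 0;0;1;1]; [:: 0;1;2;3]; [:: 0;1;3;2]];
      [:: [:: 0;0;0;0]; [:: 0;0;1;1]; [:: 0;2;0;2]; [:: 0;2;1;3]];
      [:: [:: 0;0;0;0]; [:: 0;0;1;1]; [:: 0;2;4;6]; [:: 0;2;5;7]];
      [:: [:: 0;0;0;0]; [:: 0;1;2;3]; [:: 0;2;3;1]; [:: 0;3;1;2]];
      [:: [:: 0;0;0;0]; [:: 0;1;2;3]; [:: 0;2;4;6]; [:: 0;3;6;5]];
      [:: [:: 0;0;0;0]; [:: 0;1;2;3]; [:: 0;4;8;12]; [:: 0;5;10;15]]]%N.

(* Entry (i,j) of the k-th canonical array (k = 0..9 for arrays (1)..(10)). *)
Definition canon_sq (k : 'I_10) (i j : 'I_4) : nat :=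
  nth 0%N (nth [::] (nth [::] canon k) i) j.

From Stdlib Require Import PeanoNat.
From mathcomp Require Import all_boot all_order all_algebra all_fingroup.

Set Implicit Arguments.
Unset Strict Implicit.
Unset Printing Implicit Defensive.

Import GRing.Theory.

(* A square of type B' is determined by its interior entries S11, S12, S21, S22,
   and every entry is the XOR of those selected by a 4-bit mask, namely the
   corresponding entry of array (10).  So the square is the image of this
   generic square under a linear map x |-> x *m M from F_2^4 to F_2^m, and up
   to invertible linear maps of F_2^m it only depends on the kernel of M, one
   of the 67 subspaces of F_2^4.  For each subspace we exhibit one of the ten
   arrays, permutations of the last rows and columns, a possible transposition,
   and masks whose images form a basis of the image of M, such that the
   rearranged array written in this basis agrees with the generic square modulo
   the kernel; completing the basis to an invertible matrix gives the required
   (in fact linear) map.  The enumeration of the subspaces and the check of the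
   certificates are done by computation. *)

Lemma Nat_oddE n : Nat.odd n = odd n.
Proof. by elim: n => // n IH; rewrite Nat.odd_succ -Nat.negb_odd IH. Qed.

Lemma Nat_div2E n : Nat.div2 n = n./2.
Proof.
elim: n {-2}n (leqnn n) => [|k IH] [|[|n]] //= le_n_k.
by rewrite IH // ltnW.
Qed.

Lemma Nat_testbitE n i : Nat.testbit n i = odd (n %/ 2 ^ i).
Proof.
elim: i n => [|i IH] n; first by rewrite divn1 -Nat_oddE.
by rewrite [LHS]/= IH Nat_div2E -divn2 -divnMA -expnS.
Qed.

Local Open Scope ring_scope.

Lemma F2_natr_addb (a b : bool) : (a (+) b)%:R = a%:R + b%:R :> 'F_2.
Proof. by case: a; case: b; rewrite ?addr0 ?add0r // addrr_pchar2 // pchar_Fp. Qed.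

Lemma F2_natr_neq0 (x : 'F_2) : (x != 0)%:R = x.
Proof. by case: x => [[|[|//]] ?]; apply: val_inj. Qed.

Lemma F2_oppmx m n (u : 'M['F_2]_(m, n)) : - u = u.
Proof. by apply/matrixP => i j; rewrite mxE oppr_pchar2 // pchar_Fp. Qed.

Lemma bin0 m : bin m 0 = 0.
Proof. by apply/rowP => i; rewrite !mxE div0n. Qed.

Lemma bin_lxor m x y : bin m (Nat.lxor x y) = bin m x + bin m y.
Proof.
apply/rowP => i; rewrite !mxE -!Nat_testbitE Nat.lxor_spec -F2_natr_addb.
by case: (Nat.testbit x i); case: (Nat.testbit y i).
Qed.

Lemma bin_modn m x : bin m (x %% 2 ^ m) = bin m x.
Proof.
apply/rowP => i; rewrite !mxE.
have -> : (2 ^ m = 2 ^ i * 2 ^ (m - i))%N by rewrite -expnD subnKC // ltnW.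
rewrite divn_modl ?dvdn_mulr // mulKn ?expn_gt0 // odd_mod //.
by rewrite oddX subn_eq0 leqNgt ltn_ord.
Qed.

Lemma bin_ord0 r n : bin r.+1 n 0 ord0 = (odd n)%:R.
Proof. by rewrite mxE divn1. Qed.

Lemma bin_lift0 r n (l : 'I_r) : bin r.+1 n 0 (lift ord0 l) = bin r n./2 0 l.
Proof. by rewrite !mxE /= expnS divnMA divn2. Qed.

Lemma bin_surj r (v : 'rV['F_2]_r) : exists2 n, (n < 2 ^ r)%N & v = bin r n.
Proof.
elim: r v => [|r IH] v; first by exists 0%N => //; apply/rowP => -[].
have [n lt_n_2r def_v] := IH (\row_l v 0 (lift ord0 l)).
set b := v 0 ord0 != 0; exists (b + n.*2)%N.
  rewrite expnS mul2n (@leq_ltn_trans (n.*2).+1) ?ltn_Sdouble //.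
  by rewrite -add1n leq_add2r leq_b1.
apply/rowP => j; case: (unliftP ord0 j) => [l ->|->].
  by rewrite bin_lift0 half_bit_double -def_v mxE.
by rewrite bin_ord0 oddD odd_double addbF oddb /b F2_natr_neq0.
Qed.

Lemma bin_mul_pid_mx r m n : (r <= m)%N -> (n < 2 ^ r)%N ->
  bin r n *m (pid_mx r : 'M_(r, m)) = bin m n.
Proof.
move=> le_r_m lt_n_2r; apply/rowP => j; rewrite !mxE.
case: (ltnP j r) => [lt_j_r | le_r_j].
  rewrite (bigD1 (Ordinal lt_j_r)) //= big1 => [|i].
    by rewrite !mxE eqxx lt_j_r mulr1 addr0.
  by rewrite -val_eqE !mxE => /negPf ->; rewrite mulr0.
rewrite big1 => [|i _]; last first.
  by rewrite !mxE ltn_eqF ?mulr0 // (leq_trans (ltn_ord i) le_r_j).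
by rewrite divn_small // (leq_trans lt_n_2r) // leq_pexp2l.
Qed.

Fixpoint xor_comb (xs : seq nat) (n : nat) : nat :=
  if xs is x :: xs' then Nat.lxor (if odd n then x else 0) (xor_comb xs' n./2)
  else 0.

Definition mask_mx m (xs : seq nat) : 'M['F_2]_(size xs, m) :=
  \matrix_(l < size xs) bin m (nth 0 xs l).

Lemma bin_xor_comb m xs n : bin m (xor_comb xs n) = bin (size xs) n *m mask_mx m xs.
Proof.
elim: xs n => [|x xs IH] n /=; first by rewrite bin0 [mask_mx _ _]flatmx0 mulmx0.
rewrite bin_lxor IH !mulmx_sum_row big_ord_recl bin_ord0 rowK /=.
congr (_ + _); first by case: (odd n); rewrite ?scale1r ?scale0r ?bin0.
by apply: eq_bigr => l _; rewrite bin_lift0 !rowK.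
Qed.

Lemma sum_ord4 (V : zmodType) (F : nat -> V) :
  \sum_(j < 4) F j = F 0%N + F 1%N + F 2%N + F 3%N.
Proof. by rewrite !big_ord_recl big_ord0 addr0 !addrA. Qed.

Definition canon_n (k i j : nat) : nat := nth 0 (nth [::] (nth [::] canon k) i) j.

(* Array (10): bit l of entry (i, j) says whether row l of [interior m S],
   i.e. S11, S12, S21 or S22 for l = 0, 1, 2, 3, enters entry (i, j). *)
Definition generic_mask (i j : nat) : nat := canon_n 9 i j.

Definition interior m (S : 'I_4 -> 'I_4 -> nat) : 'M['F_2]_(4, m) :=
  \matrix_(l < 4) bin m (S (inord (l./2).+1) (inord (odd l).+1)).

Lemma typeBp_entries m S : typeBp m S ->
  forall i j : 'I_4, bin m (S i j) = bin 4 (generic_mask i j) *m interior m S.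
Proof.
case=> _ row0 col0 rows cols.
pose T i j := bin m (S (inord i) (inord j)).
have T0j j : T 0%N j = 0.
  by rewrite /T (_ : inord 0 = ord0) ?row0 ?bin0 //; apply: val_inj; rewrite /= inordK.
have Ti0 i : T i 0%N = 0.
  by rewrite /T (_ : inord 0 = ord0) ?col0 ?bin0 //; apply: val_inj; rewrite /= inordK.
have Ti3 i : T i 3%N = T i 1%N + T i 2%N.
  have := rows (inord i); rewrite (eq_bigr (fun j : 'I_4 => T i j)) => [|j _]; last first.
    by rewrite /T inord_val.
  by rewrite (sum_ord4 (T i)) Ti0 add0r => /eqP; rewrite addr_eq0 F2_oppmx => /eqP.
have T3j j : T 3%N j = T 1%N j + T 2%N j.
  have := cols (inord j); rewrite (eq_bigr (fun i : 'I_4 => T i j)) => [|i _]; last first.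
    by rewrite /T inord_val.
  by rewrite (sum_ord4 (T^~ j)) T0j add0r => /eqP; rewrite addr_eq0 F2_oppmx => /eqP.
have interiorE x : bin 4 x *m interior m S =
    \sum_(l < 4) (odd (x %/ 2 ^ l))%:R *: T (l./2).+1 (odd l).+1.
  by rewrite mulmx_sum_row; apply: eq_bigr => l _; rewrite rowK mxE.
move=> i j; have -> : bin m (S i j) = T i j by rewrite /T !inord_val.
rewrite interiorE (sum_ord4 (fun l => (odd (_ %/ 2 ^ l))%:R *: T (l./2).+1 (odd l).+1)).
case: i j => [[|[|[|[|i]]]] lt_i4] [[|[|[|[|j]]]] lt_j4] //;
  rewrite /generic_mask /canon_n /= ?scale0r ?scale1r ?T0j ?Ti0 ?T3j ?Ti3 ?T0j ?Ti0;
  by rewrite ?addr0 ?add0r ?addrA.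
Qed.

(* Masks are read modulo 16, matching the truncation in [bin 4]. *)
Definition in_ker (K : bitseq) (x : nat) : bool := nth false K (x %% 16).

(* A set of masks containing 0 is a subspace iff no triple y, z, y xor z has
   exactly two members in it; [xor_closed_ext pre b] checks the triples whose
   largest member is x = size pre, b being the membership bit of x. *)
Definition xor_closed_ext (pre : bitseq) (b : bool) : bool :=
  let x := size pre in
  ((x == 0) ==> b) &&
  all (fun y => let z := Nat.lxor x y in
                (x <= z)%N || (nth false pre y + nth false pre z + b != 2)%N)
      (iota 0 x).

Fixpoint all_subspaces (n : nat) (pre : bitseq) (P : pred bitseq) : bool :=
  if n is n'.+1 then
    (if xor_closed_ext pre true then all_subspaces n' (rcons pre true) P else true) &&
    (if xor_closed_ext pre false then all_subspaces n' (rcons pre false) P else true)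
  else P pre.

Lemma all_subspacesP n pre P : all_subspaces n pre P ->
  forall s, size s = n ->
  (forall x, (size pre <= x < size pre + n)%N ->
     xor_closed_ext (take x (pre ++ s)) (nth false (pre ++ s) x)) ->
  P (pre ++ s).
Proof.
elim: n pre => [|n IH] pre /=; first by move=> Ppre [|] // _ _; rewrite cats0.
move=> /andP[all_t all_f] [|b s] //= [size_s] closed_s.
have closed_b : xor_closed_ext pre b.
  have := closed_s (size pre); rewrite leqnn addnS ltnS leq_addr take_size_cat //.
  by rewrite nth_cat ltnn subnn; apply.
rewrite -cat_rcons; apply: IH => //; first by case: b closed_b {closed_s} all_t all_f => ->.
move=> x; rewrite size_rcons cat_rcons => /andP[lt_pre_x lt_x]; apply: closed_s.
by rewrite ltnW //= addnS -addSn.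
Qed.

Definition ker_bits m (M : 'M['F_2]_(4, m)) : bitseq :=
  mkseq (fun x => bin 4 x *m M == 0) 16.

Lemma in_ker_bits m (M : 'M['F_2]_(4, m)) x : in_ker (ker_bits M) x = (bin 4 x *m M == 0).
Proof. by rewrite /in_ker nth_mkseq ?ltn_pmod // -[16%N]/(2 ^ 4)%N bin_modn. Qed.

Lemma in_ker_bits_lxor m (M : 'M['F_2]_(4, m)) x y :
  in_ker (ker_bits M) (Nat.lxor x y) -> bin 4 x *m M = bin 4 y *m M.
Proof. by rewrite in_ker_bits bin_lxor mulmxDl addr_eq0 F2_oppmx => /eqP. Qed.

Lemma count_eq0_addr (V : zmodType) (u v : V) :
  ((u == 0%R) + (v == 0%R) + (u + v == 0)%R != 2)%N.
Proof.
have [-> | nz_u] := eqVneq u 0; first by rewrite add0r; case: (v == 0).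
have [-> | nz_v] := eqVneq v 0; first by rewrite addr0 (negPf nz_u).
by case: (u + v == 0).
Qed.

Lemma ker_bits_closed m (M : 'M['F_2]_(4, m)) x : (x < 16)%N ->
  xor_closed_ext (take x (ker_bits M)) (nth false (ker_bits M) x).
Proof.
move=> lt_x16; rewrite /xor_closed_ext size_take size_mkseq lt_x16 nth_mkseq //.
apply/andP; split; first by apply/implyP => /eqP ->; rewrite bin0 mul0mx.
apply/allP => y; rewrite mem_iota add0n => /andP[_ lt_y_x] /=.
case: leqP => //= lt_z_x; rewrite !nth_take // !nth_mkseq ?(ltn_trans _ lt_x16) //.
by rewrite bin_lxor mulmxDl addrC addnAC count_eq0_addr.
Qed.

Definition all_sq (P : nat -> nat -> bool) : bool :=
  all (fun i => all (P i) (iota 0 4)) (iota 0 4).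

Lemma all_sqP P : all_sq P -> forall i j, (i < 4)%N -> (j < 4)%N -> P i j.
Proof.
move=> /allP all_i i j lt_i lt_j.
have /all_i /allP : i \in iota 0 4 by rewrite mem_iota.
by apply; rewrite mem_iota.
Qed.

(* [nf_rows] and [nf_cols] list the permutations of the rows and columns of the
   canonical array [nf_index]; bit l of a canonical entry stands for the image
   of the l-th mask of [nf_basis]. *)
Record normal_form := NormalForm {
  nf_index : nat; nf_rows : seq nat; nf_cols : seq nat;
  nf_transpose : bool; nf_basis : seq nat }.

Definition nf_square (nf : normal_form) (i j : nat) : nat :=
  let: NormalForm k ps pt tr _ := nf in
  canon_n k (if tr then nth 0 pt j else nth 0 ps i) (if tr then nth 0 ps i else nth 0 pt j).

Definition perm_fix0 (p : seq nat) : bool := perm_eq p (iota 0 4) && (head 0 p == 0).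

Definition is_normal_form (K : bitseq) (nf : normal_form) : bool :=
  let: NormalForm k ps pt tr xs := nf in
  [&& k < 10, perm_fix0 ps && perm_fix0 pt,
      all_sq (fun i j => canon_n k i j < 2 ^ size xs),
      all_sq (fun i j =>
        in_ker K (Nat.lxor (generic_mask i j) (xor_comb xs (nf_square nf i j))))
    & all (fun n => ~~ in_ker K (xor_comb xs n)) (iota 1 (2 ^ size xs).-1)]%N.

Definition normal_forms : seq normal_form := [::
  NormalForm 0 [:: 0;1;2;3] [:: 0;1;2;3] false [::];
  NormalForm 1 [:: 0;1;2;3] [:: 0;1;2;3] false [:: 15];
  NormalForm 1 [:: 0;1;2;3] [:: 0;2;1;3] false [:: 15];
  NormalForm 1 [:: 0;1;2;3] [:: 0;3;2;1] false [:: 10];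
  NormalForm 1 [:: 0;2;1;3] [:: 0;1;2;3] false [:: 15];
  NormalForm 1 [:: 0;2;1;3] [:: 0;2;1;3] false [:: 15];
  NormalForm 1 [:: 0;2;1;3] [:: 0;3;2;1] false [:: 10];
  NormalForm 1 [:: 0;3;2;1] [:: 0;1;2;3] false [:: 12];
  NormalForm 1 [:: 0;3;2;1] [:: 0;2;1;3] false [:: 12];
  NormalForm 1 [:: 0;3;2;1] [:: 0;3;2;1] false [:: 8];
  NormalForm 2 [:: 0;1;2;3] [:: 0;1;2;3] false [:: 5; 10];
  NormalForm 2 [:: 0;1;2;3] [:: 0;1;2;3] true [:: 3; 12];
  NormalForm 2 [:: 0;1;2;3] [:: 0;2;1;3] true [:: 3; 12];
  NormalForm 2 [:: 0;1;2;3] [:: 0;3;2;1] true [:: 2; 8];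
  NormalForm 2 [:: 0;2;1;3] [:: 0;1;2;3] false [:: 5; 10];
  NormalForm 2 [:: 0;3;2;1] [:: 0;1;2;3] false [:: 4; 8];
  NormalForm 3 [:: 0;1;2;3] [:: 0;1;2;3] false [:: 10];
  NormalForm 3 [:: 0;1;2;3] [:: 0;2;1;3] false [:: 10];
  NormalForm 3 [:: 0;1;2;3] [:: 0;3;2;1] false [:: 15];
  NormalForm 3 [:: 0;1;2;3] [:: 0;1;3;2] false [:: 15];
  NormalForm 3 [:: 0;1;2;3] [:: 0;2;3;1] false [:: 15];
  NormalForm 3 [:: 0;1;2;3] [:: 0;3;1;2] false [:: 15];
  NormalForm 4 [:: 0;1;2;3] [:: 0;1;2;3] false [:: 5; 15];
  NormalForm 4 [:: 0;1;2;3] [:: 0;2;1;3] false [:: 10; 15];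
  NormalForm 4 [:: 0;1;2;3] [:: 0;3;2;1] false [:: 15; 5];
  NormalForm 4 [:: 0;2;1;3] [:: 0;1;2;3] false [:: 5; 15];
  NormalForm 4 [:: 0;2;1;3] [:: 0;2;1;3] false [:: 10; 15];
  NormalForm 4 [:: 0;2;1;3] [:: 0;3;2;1] false [:: 15; 5];
  NormalForm 4 [:: 0;3;2;1] [:: 0;1;2;3] false [:: 15; 8];
  NormalForm 4 [:: 0;3;2;1] [:: 0;2;1;3] false [:: 15; 4];
  NormalForm 4 [:: 0;3;2;1] [:: 0;3;2;1] false [:: 10; 8];
  NormalForm 5 [:: 0;1;2;3] [:: 0;1;2;3] false [:: 10; 5];
  NormalForm 5 [:: 0;1;2;3] [:: 0;2;1;3] false [:: 5; 10];
  NormalForm 5 [:: 0;1;2;3] [:: 0;3;2;1] false [:: 10; 15];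
  NormalForm 5 [:: 0;1;2;3] [:: 0;1;3;2] false [:: 15; 5];
  NormalForm 5 [:: 0;1;2;3] [:: 0;2;3;1] false [:: 5; 15];
  NormalForm 5 [:: 0;1;2;3] [:: 0;3;1;2] false [:: 15; 10];
  NormalForm 5 [:: 0;3;2;1] [:: 0;1;2;3] false [:: 15; 12];
  NormalForm 5 [:: 0;3;2;1] [:: 0;2;1;3] false [:: 15; 12];
  NormalForm 5 [:: 0;3;2;1] [:: 0;3;2;1] false [:: 10; 12];
  NormalForm 5 [:: 0;3;2;1] [:: 0;1;3;2] false [:: 15; 8];
  NormalForm 5 [:: 0;3;2;1] [:: 0;2;3;1] false [:: 10; 12];
  NormalForm 5 [:: 0;3;2;1] [:: 0;3;1;2] false [:: 15; 8];
  NormalForm 5 [:: 0;1;3;2] [:: 0;1;2;3] false [:: 8; 15];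
  NormalForm 5 [:: 0;1;3;2] [:: 0;2;1;3] false [:: 4; 15];
  NormalForm 5 [:: 0;1;3;2] [:: 0;3;2;1] false [:: 8; 15];
  NormalForm 5 [:: 0;1;3;2] [:: 0;1;3;2] false [:: 12; 10];
  NormalForm 5 [:: 0;1;3;2] [:: 0;2;3;1] false [:: 4; 15];
  NormalForm 5 [:: 0;1;3;2] [:: 0;3;1;2] false [:: 12; 10];
  NormalForm 6 [:: 0;1;2;3] [:: 0;1;2;3] false [:: 3; 5; 8];
  NormalForm 6 [:: 0;1;2;3] [:: 0;2;1;3] false [:: 3; 10; 4];
  NormalForm 6 [:: 0;1;2;3] [:: 0;3;2;1] false [:: 2; 15; 8];
  NormalForm 6 [:: 0;2;1;3] [:: 0;1;2;3] false [:: 12; 5; 2];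
  NormalForm 6 [:: 0;2;1;3] [:: 0;2;1;3] false [:: 12; 10; 1];
  NormalForm 6 [:: 0;2;1;3] [:: 0;3;2;1] false [:: 8; 15; 2];
  NormalForm 6 [:: 0;3;2;1] [:: 0;1;2;3] false [:: 15; 4; 8];
  NormalForm 6 [:: 0;3;2;1] [:: 0;2;1;3] false [:: 15; 8; 4];
  NormalForm 6 [:: 0;3;2;1] [:: 0;3;2;1] false [:: 10; 12; 8];
  NormalForm 7 [:: 0;1;2;3] [:: 0;1;2;3] false [:: 10; 15];
  NormalForm 7 [:: 0;1;2;3] [:: 0;2;1;3] false [:: 5; 15];
  NormalForm 8 [:: 0;1;2;3] [:: 0;1;2;3] false [:: 1; 4; 8];
  NormalForm 8 [:: 0;1;2;3] [:: 0;2;1;3] false [:: 2; 8; 4];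
  NormalForm 8 [:: 0;1;2;3] [:: 0;3;2;1] false [:: 3; 12; 8];
  NormalForm 8 [:: 0;1;2;3] [:: 0;1;3;2] false [:: 1; 4; 12];
  NormalForm 8 [:: 0;1;2;3] [:: 0;2;3;1] false [:: 3; 12; 4];
  NormalForm 8 [:: 0;1;2;3] [:: 0;3;1;2] false [:: 2; 8; 12];
  NormalForm 9 [:: 0;1;2;3] [:: 0;1;2;3] false [:: 1; 2; 4; 8]].


Lemma subspaces_normal_form :
  all_subspaces 16 [::] (fun K => has (is_normal_form K) normal_forms).
Proof. by vm_compute. Qed.

Lemma ker_bits_normal_form m (M : 'M['F_2]_(4, m)) :
  exists nf, is_normal_form (ker_bits M) nf.
Proof.
have /(has_nthP (NormalForm 0 [::] [::] false [::]))[n _ nfP] :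
    has (is_normal_form (ker_bits M)) normal_forms.
  apply: (all_subspacesP subspaces_normal_form (s := ker_bits M)); first exact: size_mkseq.
  by move=> x /andP[_ lt_x16]; apply: ker_bits_closed.
by exists (nth (NormalForm 0 [::] [::] false [::]) normal_forms n).
Qed.

Lemma normal_form_row_free m (M : 'M['F_2]_(4, m)) nf :
  is_normal_form (ker_bits M) nf -> row_free (mask_mx 4 (nf_basis nf) *m M).
Proof.
case: nf => k ps pt tr xs /and5P[_ _ _ _ indep] /=.
apply/inj_row_free => v; have [[|n] lt_n2r ->] := bin_surj v; first by rewrite bin0.
rewrite mulmxA -bin_xor_comb => /eqP; rewrite -in_ker_bits => ker_n.
have /allP/(_ n.+1) := indep; rewrite ker_n mem_iota add1n prednK ?expn_gt0 //.
by rewrite lt_n2r => /(_ isT).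
Qed.

Lemma normal_form_entry m (M : 'M['F_2]_(4, m)) nf :
  is_normal_form (ker_bits M) nf -> forall i j, (i < 4)%N -> (j < 4)%N ->
  bin 4 (generic_mask i j) *m M =
  bin (size (nf_basis nf)) (nf_square nf i j) *m (mask_mx 4 (nf_basis nf) *m M).
Proof.
case: nf => k ps pt tr xs /and5P[_ _ _ entries _] i j lt_i4 lt_j4 /=.
by rewrite mulmxA -bin_xor_comb; apply/in_ker_bits_lxor/(all_sqP entries).
Qed.

Lemma row_free_pid_unitmx (F : fieldType) r m (W : 'M[F]_(r, m)) :
  row_free W -> exists2 A : 'M[F]_m, A \in unitmx & pid_mx r *m A = W.
Proof.
move=> free_W; have le_r_m : (r <= m)%N by rewrite -(eqP free_W) rank_leq_col.
pose U : 'M[F]_(r, m) := pid_mx r.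
have free_U : row_free U by rewrite /row_free rank_pid_mx.
have UfW : U *m (pinvmx U *m W) = W by rewrite mulmxA mulmxVp // mul1mx.
have rank_Uf : \rank (U *m (pinvmx U *m W)) = \rank U.
  by rewrite UfW (eqP free_W) (eqP free_U).
have [A unit_A UfA] := complete_unitmx rank_Uf.
by exists A => //; rewrite -UfA.
Qed.

Lemma perm_eq_iota_perm n (p : seq nat) : perm_eq p (iota 0 n) ->
  exists s : 'S_n, forall i : 'I_n, val (s i) = nth 0 p i.
Proof.
move=> pp; have size_p : size p = n by rewrite (perm_size pp) size_iota.
have lt_p i : (i < n)%N -> (nth 0 p i < n)%N.
  move=> lt_i_n; have: nth 0 p i \in iota 0 n by rewrite -(perm_mem pp) mem_nth ?size_p.
  by rewrite mem_iota.
pose f (i : 'I_n) := insubd i (nth 0 p i).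
have fE i : val (f i) = nth 0 p i by rewrite val_insubd lt_p.
have inj_f : injective f.
  move=> i j /(congr1 val); rewrite !fE => /eqP.
  by rewrite nth_uniq ?size_p ?(perm_uniq pp) ?iota_uniq // => /eqP /val_inj.
by exists (perm inj_f) => i; rewrite permE fE.
Qed.

Lemma normal_form_sound m (M : 'M['F_2]_(4, m)) nf (V : 'I_4 -> 'I_4 -> 'rV['F_2]_m) :
  is_normal_form (ker_bits M) nf ->
  (forall i j : 'I_4, V i j = bin 4 (generic_mask i j) *m M) ->
  exists (k : 'I_10) (A : 'M['F_2]_m) (b : 'rV['F_2]_m) (s t : 'S_4) (tr : bool),
    [/\ A \in unitmx, s ord0 = ord0, t ord0 = ord0,
        (forall i j, (canon_sq k i j < 2 ^ m)%N) &
        (forall i j : 'I_4,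
           V i j = bin m (canon_sq k (if tr then t j else s i) (if tr then s i else t j))
                   *m A + b)].
Proof.
move=> nfP VE; have free_W := normal_form_row_free nfP.
have [A unit_A def_W] := row_free_pid_unitmx free_W.
have le_r_m : (size (nf_basis nf) <= m)%N by rewrite -(eqP free_W) rank_leq_col.
have entryE := normal_form_entry nfP; move: nfP {free_W} entryE def_W le_r_m.
case: nf => k ps pt tr xs /= /and5P[lt_k10 /andP[/andP[perm_ps ps0] /andP[perm_pt pt0]]].
move=> bounded _ _ entryE def_W le_r_m.
have [s sE] := perm_eq_iota_perm perm_ps; have [t tE] := perm_eq_iota_perm perm_pt.
have canon_lt i j : (i < 4)%N -> (j < 4)%N -> (canon_n k i j < 2 ^ m)%N.
  move=> lt_i4 lt_j4; apply: leq_trans (all_sqP bounded lt_i4 lt_j4) _.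
  by rewrite leq_pexp2l.
exists (inord k), A, 0, s, t, tr; split => //.
- by apply: val_inj; rewrite sE nth0; apply/eqP.
- by apply: val_inj; rewrite tE nth0; apply/eqP.
- by move=> i j; rewrite /canon_sq inordK //; apply: canon_lt.
move=> i j; rewrite VE addr0 entryE // -def_W mulmxA.
rewrite -sE -tE -!(fun_if val) bin_mul_pid_mx ?(all_sqP bounded) ?ltn_ord //.
by rewrite /canon_sq inordK.
Qed.

Theorem mainTheorem6 (m : nat) (S : 'I_4 -> 'I_4 -> nat) :
  typeBp m S ->
  exists (k : 'I_10) (A : 'M['F_2]_m) (b : 'rV['F_2]_m) (s t : 'S_4) (tr : bool),
    [/\ A \in unitmx, s ord0 = ord0, t ord0 = ord0,
        (forall i j, (canon_sq k i j < 2 ^ m)%N) &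
        (forall i j : 'I_4,
           bin m (S i j) =
           bin m (canon_sq k (if tr then t j else s i) (if tr then s i else t j))
             *m A + b)].
Proof.
move=> BpS; have [nf nfP] := ker_bits_normal_form (interior m S).
exact: normal_form_sound nfP (typeBp_entries BpS).
Qed.
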